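(* Let $(\Phi,D)$ be a domain-free continuous information algebra. Then $(\Phi,D)$ is s-continuous if and only if for every directed subset $X\subseteq\Phi$ and every $x\in D$, $(\vee X)^{\Rightarrow x}=\bigvee_{\phi\in X}\phi^{\Rightarrow x}$.
   Context: A domain-free information algebra $(\Phi,D)$ consists of a set $\Phi$, a lattice $D$, a combination $\otimes$ and a focusing $(\psi,x)\mapsto\psi^{\Rightarrow x}$ ($x\in D$) such that: $\otimes$ is associative, commutative with neutral element $e$; $(\psi^{\Rightarrow y})^{\Rightarrow x}=\psi^{\Rightarrow x\wedge y}$; $(\phi^{\Rightarrow x}\otimes\psi)^{\Rightarrow x}=\phi^{\Rightarrow x}\otimes\psi^{\Rightarrow x}$; every $\psi$ has some $x$ with $\psi^{\Rightarrow x}=\psi$; $\psi\otimes\psi^{\Rightarrow x}=\psi$. Order: $\psi\le\phi$ iff $\psi\otimes\phi=\phi$; suprema refer to this order. $a\ll b$ means: for every directed $X$ with $b\le\vee X$ there is $c\in X$ with $a\le c$. $(\Phi,D)$, with $D$ having a top element, is continuous (resp. s-continuous) if there exists $\Gamma\subseteq\Phi$, closed under combination and containing $e$, such that every directed subset of $\Gamma$ has a supremum in $\Phi$ and $\phi=\vee\{\psi\in\Gamma:\psi\ll\phi\}$ for all $\phi\in\Phi$ (resp. $\phi^{\Rightarrow x}=\vee\{\psi\in\Gamma:\psi=\psi^{\Rightarrow x}\ll\phi\}$ for all $\phi\in\Phi$, $x\in D$). *)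

From mathcomp Require Import all_boot all_order.
Set Implicit Arguments. Unset Strict Implicit. Unset Printing Implicit Defensive.
Import Order.TTheory.
Local Open Scope order_scope.

Section DFIA.
Variables (disp : Order.disp_t) (D : tLatticeType disp) (Phi : Type).
Variables (comb : Phi -> Phi -> Phi) (e : Phi) (foc : Phi -> D -> Phi).

Definition dfia : Prop :=
  (forall a b c, comb a (comb b c) = comb (comb a b) c) /\
  (forall a b, comb a b = comb b a) /\
  (forall a, comb e a = a) /\
  (forall psi x y, foc (foc psi y) x = foc psi (Order.meet x y)) /\
  (forall phi psi x, foc (comb (foc phi x) psi) x = comb (foc phi x) (foc psi x)) /\
  (forall psi, exists x, foc psi x = psi) /\
  (forall psi x, comb psi (foc psi x) = psi).

Definition ile (psi phi : Phi) : Prop := comb psi phi = phi.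

Definition is_sup (X : Phi -> Prop) (s : Phi) : Prop :=
  (forall a, X a -> ile a s) /\ (forall u, (forall a, X a -> ile a u) -> ile s u).

Definition directed (X : Phi -> Prop) : Prop :=
  (exists a, X a) /\
  (forall a b, X a -> X b -> exists c, [/\ X c, ile a c & ile b c]).

Definition way_below (a b : Phi) : Prop :=
  forall X s, directed X -> is_sup X s -> ile b s -> exists c, X c /\ ile a c.

Definition basis_like (Gamma : Phi -> Prop) : Prop :=
  [/\ (forall a b, Gamma a -> Gamma b -> Gamma (comb a b)),
      Gamma e
    & (forall X, directed X -> (forall a, X a -> Gamma a) -> exists s, is_sup X s)].

Definition continuous : Prop :=
  exists Gamma : Phi -> Prop, basis_like Gamma /\
    (forall phi, is_sup (fun psi => Gamma psi /\ way_below psi phi) phi).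

Definition s_continuous : Prop :=
  exists Gamma : Phi -> Prop, basis_like Gamma /\
    (forall phi x, is_sup (fun psi => [/\ Gamma psi, psi = foc psi x & way_below psi phi])
                          (foc phi x)).

Definition focus_preserves_directed_sups : Prop :=
  forall (X : Phi -> Prop) (s : Phi) (x : D), directed X -> is_sup X s ->
    is_sup (fun y => exists phi, X phi /\ y = foc phi x) (foc s x).

End DFIA.

(* If every focused element is the directed supremum of focused elements way
   below it, then a bound way below a directed supremum sits below some member
   of the family, so focusing commutes with directed suprema.  Conversely,
   continuity makes every directed family have a supremum, so the whole of Phi
   may serve as the basis; focusing the directed family of basis elements way
   below phi then yields focused elements way below phi whose supremum is the
   focus of phi. *)

From mathcomp Require Import all_boot all_order.
Import Order.TTheory.
Set Implicit Arguments.

Section InformationOrder.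
Variables (disp : Order.disp_t) (D : tLatticeType disp) (Phi : Type).
Variables (comb : Phi -> Phi -> Phi) (e : Phi) (foc : Phi -> D -> Phi).
Hypothesis Halg : dfia comb e foc.

Let combA : forall a b c, comb a (comb b c) = comb (comb a b) c := Halg.1.
Let combC : forall a b, comb a b = comb b a := Halg.2.1.
Let comb0 : forall a, comb e a = a := Halg.2.2.1.
Let focM : forall psi x y, foc (foc psi y) x = foc psi (Order.meet x y) :=
  Halg.2.2.2.1.
Let focC : forall phi psi x,
    foc (comb (foc phi x) psi) x = comb (foc phi x) (foc psi x) :=
  Halg.2.2.2.2.1.
Let focS : forall psi, exists x, foc psi x = psi := Halg.2.2.2.2.2.1.
Let combfoc : forall psi x, comb psi (foc psi x) = psi := Halg.2.2.2.2.2.2.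

Local Notation ile := (ile comb).
Local Notation way_below := (way_below comb).

Lemma ile_refl a : ile a a.
Proof. by have [x Hx] := focS a; have := combfoc a x; rewrite Hx. Qed.

Lemma ile_trans a b c : ile a b -> ile b c -> ile a c.
Proof. by rewrite /ile => Hab Hbc; rewrite -{1}Hbc combA Hab Hbc. Qed.

Lemma ile_combl a b : ile a (comb a b).
Proof. by rewrite /ile combA ile_refl. Qed.

Lemma ile_combr a b : ile b (comb a b).
Proof. by rewrite combC; apply: ile_combl. Qed.

Lemma ile_comb_lub a b u : ile a u -> ile b u -> ile (comb a b) u.
Proof. by rewrite /ile => Hau Hbu; rewrite -combA Hbu Hau. Qed.

Lemma ile_foc a x : ile (foc a x) a.
Proof. by rewrite /ile combC combfoc. Qed.

Lemma foc_ile a b x : ile a b -> ile (foc a x) (foc b x).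
Proof.
move=> Hab; have Hb : comb (foc a x) b = b := ile_trans (ile_foc a x) Hab.
by rewrite /ile -focC Hb.
Qed.

Lemma focK a x : foc (foc a x) x = foc a x.
Proof. by rewrite focM meetxx. Qed.

Lemma way_below_ile a b : way_below a b -> ile a b.
Proof.
move=> Hab.
have Hdir : directed comb (eq^~ b).
  split=> [|_ _ -> ->]; first by exists b.
  by exists b; split=> //; apply: ile_refl.
have Hsup : is_sup comb (eq^~ b) b.
  by split=> [_ ->|u Hu]; [apply: ile_refl | apply: Hu].
by have [_ [-> ?]] := Hab _ _ Hdir Hsup (ile_refl b).
Qed.

Lemma ile_way_below_trans a b c : ile a b -> way_below b c -> way_below a c.
Proof.
move=> Hab Hbc X s Hdir Hsup Hcs.
have [d [Xd Hbd]] := Hbc X s Hdir Hsup Hcs.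
by exists d; split=> //; apply: ile_trans Hab Hbd.
Qed.

Lemma way_below_ile_trans a b c : way_below a b -> ile b c -> way_below a c.
Proof.
by move=> Hab Hbc X s Hdir Hsup Hcs; apply: Hab Hdir Hsup (ile_trans Hbc Hcs).
Qed.

Lemma way_below_comb a b c :
  way_below a c -> way_below b c -> way_below (comb a b) c.
Proof.
move=> Hac Hbc X s Hdir Hsup Hcs.
have [d1 [Xd1 Had1]] := Hac X s Hdir Hsup Hcs.
have [d2 [Xd2 Hbd2]] := Hbc X s Hdir Hsup Hcs.
have [d [Xd Hd1 Hd2]] := Hdir.2 d1 d2 Xd1 Xd2.
exists d; split=> //.
by apply: ile_comb_lub; [apply: ile_trans Had1 Hd1 | apply: ile_trans Hbd2 Hd2].
Qed.

Lemma way_below_e a : way_below e a.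
Proof. by move=> X s [[c Xc] _] _ _; exists c; split=> //; apply: comb0. Qed.

Lemma directed_way_below (G : Phi -> Prop) phi :
  (forall a b, G a -> G b -> G (comb a b)) -> G e ->
  directed comb (fun psi => G psi /\ way_below psi phi).
Proof.
move=> Gcomb Ge; split; first by exists e; split=> //; apply: way_below_e.
move=> a b [Ga Ha] [Gb Hb]; exists (comb a b).
by split; [split; [apply: Gcomb | apply: way_below_comb] | apply: ile_combl
          | apply: ile_combr].
Qed.

Lemma continuous_directed_sup : continuous comb e ->
  forall X, directed comb X -> exists s, is_sup comb X s.
Proof.
move=> [G [[Gcomb Ge Gsup] Happrox]] X [[p Xp] Xdir].
pose U a := G a /\ exists phi, X phi /\ way_below a phi.
have Udir : directed comb U.
  split; first by exists e; split=> //; exists p; split=> //; apply: way_below_e.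
  move=> a b [Ga [pa [Xpa Ha]]] [Gb [pb [Xpb Hb]]].
  have [q [Xq Hpa Hpb]] := Xdir pa pb Xpa Xpb.
  exists (comb a b); split; [split | apply: ile_combl | apply: ile_combr].
  - exact: Gcomb.
  - exists q; split=> //.
    by apply: way_below_comb; apply: way_below_ile_trans; eassumption.
have [s [Us_ub Us_least]] := Gsup U Udir (fun a Ua => Ua.1).
exists s; split.
- move=> phi Xphi; apply: (Happrox phi).2 => a [Ga Ha].
  by apply: Us_ub; split=> //; exists phi.
- move=> u Xu; apply: Us_least => a [_ [phi [Xphi Ha]]].
  exact: ile_trans (way_below_ile Ha) (Xu phi Xphi).
Qed.

Lemma s_continuous_focus_preserves_directed_sups :
  s_continuous comb e foc -> focus_preserves_directed_sups comb foc.
Proof.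
move=> [G [_ Happrox]] X s x Hdir Hsup; split.
  by move=> _ [phi [Xphi ->]]; apply/foc_ile/Hsup.1.
move=> u Hu; apply: (Happrox s x).2 => psi [_ Epsi Hpsi].
have [c [Xc Hpsic]] := Hpsi X s Hdir Hsup (ile_refl s).
by rewrite Epsi; apply: ile_trans (foc_ile x Hpsic) _; apply: Hu; exists c.
Qed.

(* The basis of the continuous structure need not be closed under focusing, so
   the whole of Phi is used as the basis of the s-continuous structure. *)
Lemma focus_preserves_directed_sups_s_continuous : continuous comb e ->
  focus_preserves_directed_sups comb foc -> s_continuous comb e foc.
Proof.
move=> Hcont Hfoc; have [G [[Gcomb Ge _] Happrox]] := Hcont.
exists (fun _ => True); split.
  by split=> // X Hdir _; apply: continuous_directed_sup.
move=> phi x.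
have [Hub Hleast] :=
  Hfoc _ phi x (directed_way_below G phi Gcomb Ge) (Happrox phi).
split=> [psi [_ Epsi Hpsi]|u Hu].
  by rewrite Epsi; apply/foc_ile/way_below_ile.
apply: Hleast => _ [p [[_ Hp] ->]]; apply: Hu; split=> //.
  by rewrite focK.
exact: ile_way_below_trans (ile_foc p x) Hp.
Qed.

End InformationOrder.

Theorem theorem3p11 (disp : Order.disp_t) (D : tLatticeType disp) (Phi : Type)
  (comb : Phi -> Phi -> Phi) (e : Phi) (foc : Phi -> D -> Phi)
  (Halg : dfia comb e foc) (Hcont : continuous comb e) :
  s_continuous comb e foc <-> focus_preserves_directed_sups comb foc.
Proof.
split; first exact: s_continuous_focus_preserves_directed_sups.
exact: focus_preserves_directed_sups_s_continuous.
Qed.
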